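(* Let $\mathcal{T}$ be a stiffly-connected, edge-simple 3-dimensional truss with stiffness matrix $\mathbf{M}$, let $\mathbf{q}$ be a vector orthogonal to the null space of $\mathbf{M}$, let $s$ be an oriented triangle, and let $i,j$ be a pair of vertices within tetrahedron-distance $h$ of $s$. Then $(\bar{\mathbf{q}}^{\langle s\rangle})^\top\mathbf{M}\,\bar{\mathbf{q}}^{\langle s\rangle}\ge 2^{-\Theta(h)}\|\bar{\mathbf{q}}^{\langle s\rangle}_i-\bar{\mathbf{q}}^{\langle s\rangle}_j\|_2^2$.
   Context: A 3-dimensional truss has $n$ vertices at distinct points $\mathbf{p}_i\in\mathbb{R}^3$, a set of tetrahedra (four vertices each), edges all pairs of vertices sharing a tetrahedron, and positive stiffness coefficients $\gamma(e)$; its stiffness matrix is $\mathbf{M}=\sum_{e=(i,j)}\frac{\gamma(e)}{\|\mathbf{p}_i-\mathbf{p}_j\|_2}\mathbf{b}^{(e)}\mathbf{b}^{(e)\top}$ where $\mathbf{b}^{(e)}\in\mathbb{R}^{3n}$ has block $i$ equal to $(\mathbf{p}_i-\mathbf{p}_j)/\|\mathbf{p}_i-\mathbf{p}_j\|_2$, block $j$ its negative, zeros elsewhere. Edge-simple: tetrahedra form a simplicial complex, each has constant-bounded aspect ratio, and edge lengths and stiffness coefficients are bounded above and below by positive constants. Stiffly-connected: the graph on tetrahedra with adjacency = sharing a triangle face is connected, and for each vertex its restriction to the tetrahedra containing that vertex is connected. For $\mathbf{v}\in\mathbb{R}^{3n}$, $\mathbf{v}_i\in\mathbb{R}^3$ is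 its $i$-th block. Fix an index $c$ and define $\mathbf{p}^{\perp xy}_i=[-(\mathbf{p}_i-\mathbf{p}_c)_y,(\mathbf{p}_i-\mathbf{p}_c)_x,0]^\top$, $\mathbf{p}^{\perp xz}_i=[-(\mathbf{p}_i-\mathbf{p}_c)_z,0,(\mathbf{p}_i-\mathbf{p}_c)_x]^\top$, $\mathbf{p}^{\perp yz}_i=[0,-(\mathbf{p}_i-\mathbf{p}_c)_z,(\mathbf{p}_i-\mathbf{p}_c)_y]^\top$. For an oriented triangle $s=\langle s_1,s_2,s_3\rangle$ (ordered triple of vertices of a triangle face), the centering $\bar{\mathbf{q}}^{\langle s\rangle}$ of $\mathbf{q}$ is the vector $\mathbf{q}+\sum_{d_1d_2\in\{xy,xz,yz\}}c^{\langle s\rangle\perp d_1d_2}\mathbf{p}^{\perp d_1d_2}$ (real scalars $c$) such that the plane through $\bar{\mathbf{q}}^{\langle s\rangle}_{s_1},\bar{\mathbf{q}}^{\langle s\rangle}_{s_2},\bar{\mathbf{q}}^{\langle s\rangle}_{s_3}$ is parallel to the plane through $\mathbf{p}_{s_1},\mathbf{p}_{s_2},\mathbf{p}_{s_3}$ and $\bar{\mathbf{q}}^{\langle s\rangle}_{s_1}-\bar{\mathbf{q}}^{\langle s\rangle}_{s_2}$ is parallel to $\mathbf{p}_{s_1}-\mathbf{p}_{s_2}$. The tetrahedron-distance between objects $x$ and $y$ of the complex is the smallest $d$ for which there is a sequence of tetrahedra $t^{(0)},\dots,t^{(d)}$ with $x\subseteq t^{(0)}$, $y\subseteq t^{(d)}$,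 and consecutive tetrahedra sharing a triangle face. The constant in $\Theta(h)$ depends only on the constant bounds above. *)

From HB Require Import structures.
From mathcomp Require Import all_boot all_order all_algebra.
From mathcomp Require Import reals.
Set Implicit Arguments. Unset Strict Implicit. Unset Printing Implicit Defensive.
Import Order.TTheory GRing.Theory Num.Theory.
Local Open Scope ring_scope.

Section Truss.
Variable R : realType.

Definition comp (v : 'rV[R]_3) (k : nat) : R := v 0 (inord k).
Definition dot3 (u v : 'rV[R]_3) : R := \sum_(k < 3) u 0 k * v 0 k.
Definition norm3 (v : 'rV[R]_3) : R := Num.sqrt (dot3 v v).
Definition vec3 (x y z : R) : 'rV[R]_3 :=
  \row_(k < 3) (if val k == 0%N then x else if val k == 1%N then y else z).
Definition cross3 (u v : 'rV[R]_3) : 'rV[R]_3 :=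
  vec3 (comp u 1 * comp v 2 - comp u 2 * comp v 1)
       (comp u 2 * comp v 0 - comp u 0 * comp v 2)
       (comp u 0 * comp v 1 - comp u 1 * comp v 0).
Definition det3 (u v w : 'rV[R]_3) : R := dot3 u (cross3 v w).

Variable n : nat.
Implicit Types (p : 'I_n -> 'rV[R]_3) (T : {set {set 'I_n}}).

Definition dist p (i j : 'I_n) : R := norm3 (p i - p j).

Definition is_edge T (a b : 'I_n) : bool :=
  (a != b) && [exists t in T, (a \in t) && (b \in t)].

Definition tadj (t t' : {set 'I_n}) : bool := #|t :&: t'| == 3%N.

Definition tchain T (P : {set 'I_n} -> Prop) (d : nat) (f : nat -> {set 'I_n}) :=
  (forall k, (k <= d)%N -> f k \in T /\ P (f k)) /\
  (forall k, (k < d)%N -> tadj (f k) (f k.+1)).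

Definition tdist_le T (x y : {set 'I_n}) (h : nat) : Prop :=
  exists d f, (d <= h)%N /\ tchain T (fun _ => True) d f /\
              x \subset f 0%N /\ y \subset f d.

Definition tri_area p (a b c : 'I_n) : R :=
  norm3 (cross3 (p b - p a) (p c - p a)) / 2.
Definition tet_volume p (a b c d : 'I_n) : R :=
  `|det3 (p b - p a) (p c - p a) (p d - p a)| / 6.
Definition tet_surface p (a b c d : 'I_n) : R :=
  tri_area p a b c + tri_area p a b d + tri_area p a c d + tri_area p b c d.
Definition tet_inradius p (a b c d : 'I_n) : R :=
  3 * tet_volume p a b c d / tet_surface p a b c d.
Definition tet_maxedge p (a b c d : 'I_n) : R :=
  Num.max (Num.max (Num.max (dist p a b) (dist p a c)) (Num.max (dist p a d) (dist p b c)))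
          (Num.max (dist p b d) (dist p c d)).
Definition tet_aspect p (a b c d : 'I_n) : R :=
  tet_maxedge p a b c d / tet_inradius p a b c d.

Definition in_hull p (S : {set 'I_n}) (x : 'rV[R]_3) : Prop :=
  exists w : 'I_n -> R, (forall k, 0 <= w k) /\ (forall k, k \notin S -> w k = 0) /\
    \sum_k w k = 1 /\ x = \sum_k w k *: p k.

Definition simplicial_complex p T : Prop :=
  (forall t, t \in T -> #|t| = 4%N) /\
  (forall t t', t \in T -> t' \in T -> forall x,
      in_hull p t x /\ in_hull p t' x <-> in_hull p (t :&: t') x).

Definition edge_simple (K Lmin Lmax gmin gmax : R) p T (gam : 'I_n -> 'I_n -> R) : Prop :=
  simplicial_complex p T /\
  (forall t a b c d, t \in T -> t = [set a; b; c; d] ->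
      0 < tet_volume p a b c d /\ tet_aspect p a b c d <= K) /\
  (forall a b, is_edge T a b -> Lmin <= dist p a b <= Lmax) /\
  (forall a b, is_edge T a b -> gmin <= gam a b <= gmax).

Definition stiffly_connected T : Prop :=
  (forall t t', t \in T -> t' \in T ->
     exists d f, tchain T (fun _ => True) d f /\ f 0%N = t /\ f d = t') /\
  (forall v : 'I_n, forall t t', t \in T -> t' \in T -> v \in t -> v \in t' ->
     exists d f, tchain T (fun u => v \in u) d f /\ f 0%N = t /\ f d = t').

(* vectors of R^{3n} are represented blockwise as 'I_n -> 'rV_3 *)
Definition bvec p (a b : 'I_n) (i : 'I_n) : 'rV[R]_3 :=
  let u := (dist p a b)^-1 *: (p a - p b) in
  if i == a then u else if i == b then - u else 0.

(* block (i,j) of M = sum_e gamma(e)/len(e) * b^(e) b^(e)^T ; each undirected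
   edge {a,b} counted once via a < b *)
Definition Mblk p T (gam : 'I_n -> 'I_n -> R) (i j : 'I_n) : 'M[R]_3 :=
  \sum_(a : 'I_n) \sum_(b : 'I_n | (a < b)%N)
     (if is_edge T a b then
        (gam a b / dist p a b) *: ((bvec p a b i)^T *m bvec p a b j)
      else 0).

(* (M v)_i written as a row vector *)
Definition applyM p T gam (v : 'I_n -> 'rV[R]_3) (i : 'I_n) : 'rV[R]_3 :=
  \sum_j v j *m (Mblk p T gam i j)^T.

Definition qform p T gam (v : 'I_n -> 'rV[R]_3) : R :=
  \sum_i \sum_j (v i *m Mblk p T gam i j *m (v j)^T) 0 0.

Definition inner (u v : 'I_n -> 'rV[R]_3) : R := \sum_i dot3 (u i) (v i).

Definition orth_nullspace p T gam (q : 'I_n -> 'rV[R]_3) : Prop :=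
  forall v, (forall i, applyM p T gam v i = 0) -> inner q v = 0.

Definition perp_xy p (c i : 'I_n) : 'rV[R]_3 :=
  let d := p i - p c in vec3 (- comp d 1) (comp d 0) 0.
Definition perp_xz p (c i : 'I_n) : 'rV[R]_3 :=
  let d := p i - p c in vec3 (- comp d 2) 0 (comp d 0).
Definition perp_yz p (c i : 'I_n) : 'rV[R]_3 :=
  let d := p i - p c in vec3 0 (- comp d 2) (comp d 1).

Definition shifted p (c : 'I_n) (q : 'I_n -> 'rV[R]_3) (cxy cxz cyz : R) (i : 'I_n) :=
  q i + cxy *: perp_xy p c i + cxz *: perp_xz p c i + cyz *: perp_yz p c i.

(* oriented triangle: ordered triple of vertices of a triangle face *)
Definition oriented_triangle T (s1 s2 s3 : 'I_n) : Prop :=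
  [/\ s1 != s2, s1 != s3, s2 != s3 &
      exists2 t, t \in T & [set s1; s2; s3] \subset t].

(* qb is a centering of q w.r.t. <s1,s2,s3>: the plane through qb_s1,qb_s2,qb_s3
   is parallel to the plane through p_s1,p_s2,p_s3, and qb_s1 - qb_s2 is
   parallel to p_s1 - p_s2 *)
Definition centering_cond p (s1 s2 s3 : 'I_n) (qb : 'I_n -> 'rV[R]_3) : Prop :=
  let nrm := cross3 (p s2 - p s1) (p s3 - p s1) in
  [/\ dot3 (qb s2 - qb s1) nrm = 0, dot3 (qb s3 - qb s1) nrm = 0 &
      cross3 (qb s1 - qb s2) (p s1 - p s2) = 0].

End Truss.

(* Let v be the centered displacement and E = v^T M v.  Every edge ab contributes
   gam_ab / |p_a - p_b|^3 * ((p_a - p_b) . (v_a - v_b))^2 to E, so all edge strains are at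
   most delta = sqrt (E Lmax^3 / gmin).  Bounded aspect ratio and edge lengths bound the
   volume of each tetrahedron from below, so by Cramer's rule the displacement of a vertex
   relative to the three others of its tetrahedron is O(delta + their displacements).
   The centering removes the rigid motion of the base triangle s: v_s1 - v_s2 is parallel
   to the edge s1 s2 and v_s3 - v_s1 lies in the plane of s, which makes the relative
   displacements inside s O(delta).  Walking along a chain of h face-adjacent tetrahedra
   multiplies the bound by a constant at each step, hence |v_i - v_j|^2 <= 2^O(h) E. *)

From Pilot Require Import Defs.
From mathcomp Require Import all_boot all_order all_algebra.
From mathcomp Require Import reals.
From mathcomp Require Import ring lra.
Set Implicit Arguments. Unset Strict Implicit. Unset Printing Implicit Defensive.
Import Order.TTheory GRing.Theory Num.Theory.
Local Open Scope ring_scope.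

Section Vectors.
Variable R : realType.
Implicit Types (x y z a b c : R) (t u v w : 'rV[R]_3).

Lemma vec3K u : vec3 (Defs.comp u 0%N) (Defs.comp u 1%N) (Defs.comp u 2%N) = u.
Proof.
apply/rowP => k; rewrite /vec3 /Defs.comp mxE.
by case: k => [[|[|[|//]]] ?] /=; congr (u 0 _); apply: val_inj; rewrite /= inordK.
Qed.

Lemma comp_vec3 a b c :
  [/\ Defs.comp (vec3 a b c) 0%N = a, Defs.comp (vec3 a b c) 1%N = b &
      Defs.comp (vec3 a b c) 2%N = c].
Proof. by rewrite /Defs.comp /vec3 !mxE /= !inordK. Qed.

Lemma vec3_0 : vec3 0 0 0 = 0 :> 'rV[R]_3.
Proof. by apply/rowP => k; rewrite /vec3 !mxE; case: ifP => _ //; case: ifP. Qed.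

Lemma vec3D a b c x y z : vec3 a b c + vec3 x y z = vec3 (a + x) (b + y) (c + z).
Proof. by apply/rowP => k; rewrite /vec3 !mxE; case: ifP => _ //; case: ifP. Qed.

Lemma vec3N a b c : - vec3 a b c = vec3 (- a) (- b) (- c).
Proof. by apply/rowP => k; rewrite /vec3 !mxE; case: ifP => _ //; case: ifP. Qed.

Lemma vec3Z x a b c : x *: vec3 a b c = vec3 (x * a) (x * b) (x * c).
Proof. by apply/rowP => k; rewrite /vec3 !mxE; case: ifP => _ //; case: ifP. Qed.

Lemma dot3_vec3 a b c x y z : dot3 (vec3 a b c) (vec3 x y z) = a * x + b * y + c * z.
Proof. by rewrite /dot3 !big_ord_recr big_ord0 /= !mxE /= add0r. Qed.

Lemma cross3_vec3 a b c x y z :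
  cross3 (vec3 a b c) (vec3 x y z) = vec3 (b * z - c * y) (c * x - a * z) (a * y - b * x).
Proof.
have [a1 b1 c1] := comp_vec3 a b c; have [a2 b2 c2] := comp_vec3 x y z.
by rewrite /cross3 a1 b1 c1 a2 b2 c2.
Qed.

Definition vec3E := (vec3D, vec3N, vec3Z, dot3_vec3, cross3_vec3).

Lemma dot3C u v : dot3 u v = dot3 v u.
Proof. by apply: eq_bigr => k _; rewrite mulrC. Qed.

Lemma dot3Dr u v w : dot3 u (v + w) = dot3 u v + dot3 u w.
Proof. by rewrite -[u]vec3K -[v]vec3K -[w]vec3K !vec3E; ring. Qed.

Lemma dot3Nr u v : dot3 u (- v) = - dot3 u v.
Proof. by rewrite -[u]vec3K -[v]vec3K !vec3E; ring. Qed.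

Lemma dot3Zr x u v : dot3 u (x *: v) = x * dot3 u v.
Proof. by rewrite -[u]vec3K -[v]vec3K !vec3E; ring. Qed.

Lemma dot3r0 u : dot3 u 0 = 0.
Proof. by rewrite -vec3_0 -[u]vec3K !vec3E; ring. Qed.

Lemma dot3NN u v : dot3 (- u) (- v) = dot3 u v.
Proof. by rewrite dot3Nr dot3C dot3Nr dot3C opprK. Qed.

Lemma dot3_ge0 u : 0 <= dot3 u u.
Proof. by rewrite -[u]vec3K dot3_vec3 -!expr2 !addr_ge0 ?sqr_ge0. Qed.

Lemma norm3_ge0 u : 0 <= norm3 u.
Proof. exact: sqrtr_ge0. Qed.

Lemma sqr_norm3 u : norm3 u ^+ 2 = dot3 u u.
Proof. by rewrite sqr_sqrtr ?dot3_ge0. Qed.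

Lemma cross3C u v : cross3 v u = - cross3 u v.
Proof. by rewrite -[u]vec3K -[v]vec3K !vec3E; congr vec3; ring. Qed.

Lemma lagrange3 u v :
  dot3 u u * dot3 v v = dot3 u v ^+ 2 + dot3 (cross3 u v) (cross3 u v).
Proof. by rewrite -[u]vec3K -[v]vec3K !vec3E; ring. Qed.

Lemma ler_norm_sqr x y : 0 <= y -> x ^+ 2 <= y ^+ 2 -> `|x| <= y.
Proof. by move=> y0 le_sqr; rewrite -ler_sqr ?nnegrE //= real_normK ?num_real. Qed.

Lemma cauchy_schwarz3 u v : `|dot3 u v| <= norm3 u * norm3 v.
Proof.
apply: ler_norm_sqr; first by rewrite mulr_ge0 ?norm3_ge0.
by rewrite exprMn !sqr_norm3 lagrange3 lerDl dot3_ge0.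
Qed.

Lemma norm3_cross_le u v : norm3 (cross3 u v) <= norm3 u * norm3 v.
Proof.
rewrite -[norm3 _]ger0_norm ?norm3_ge0 //; apply: ler_norm_sqr.
  by rewrite mulr_ge0 ?norm3_ge0.
by rewrite exprMn !sqr_norm3 lagrange3 lerDr sqr_ge0.
Qed.

Lemma norm3Z x u : norm3 (x *: u) = `|x| * norm3 u.
Proof.
by rewrite /norm3 dot3Zr dot3C dot3Zr mulrA -expr2 sqrtrM ?sqr_ge0 // sqrtr_sqr.
Qed.

Lemma norm3N u : norm3 (- u) = norm3 u.
Proof. by rewrite -scaleN1r norm3Z normrN normr1 mul1r. Qed.

Lemma norm3_distC u v : norm3 (u - v) = norm3 (v - u).
Proof. by rewrite -norm3N opprB. Qed.

Lemma ler_norm3D u v : norm3 (u + v) <= norm3 u + norm3 v.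
Proof.
rewrite -[norm3 (u + v)]ger0_norm ?norm3_ge0 //; apply: ler_norm_sqr.
  by rewrite addr_ge0 ?norm3_ge0.
rewrite sqrrD !sqr_norm3 dot3Dr dot3C dot3Dr (dot3C (u + v)) dot3Dr (dot3C v u).
have := cauchy_schwarz3 u v; have := ler_norm (dot3 u v); lra.
Qed.

Lemma ler_dist3D u v w : norm3 (u - w) <= norm3 (u - v) + norm3 (v - w).
Proof. by have := ler_norm3D (u - v) (v - w); rewrite addrA subrK. Qed.

Lemma det3_dot_cross u v w : det3 u v w = dot3 (cross3 u v) w.
Proof. by rewrite /det3 -[u]vec3K -[v]vec3K -[w]vec3K !vec3E; ring. Qed.

Lemma det3_translate t u v w : det3 (t - u) (t - v) (t - w) = det3 (v - u) (w - u) (t - u).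
Proof. by rewrite /det3 -[t]vec3K -[u]vec3K -[v]vec3K -[w]vec3K !vec3E; ring. Qed.

Lemma det3_cross_self u v : det3 (cross3 u v) v u = - dot3 (cross3 u v) (cross3 u v).
Proof. by rewrite /det3 (cross3C u) dot3Nr. Qed.

Lemma sqr_det3 u v w :
  det3 u v w ^+ 2 = dot3 (cross3 u v) (cross3 (cross3 v w) (cross3 w u)).
Proof. by rewrite /det3 -[u]vec3K -[v]vec3K -[w]vec3K !vec3E; ring. Qed.

Lemma cramer3 t u v w :
  det3 u v w *: t =
  dot3 t u *: cross3 v w + dot3 t v *: cross3 w u + dot3 t w *: cross3 u v.
Proof.
by rewrite /det3 -[t]vec3K -[u]vec3K -[v]vec3K -[w]vec3K !vec3E; congr vec3; ring.
Qed.

Lemma cramer3_le t u v w :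
  `|det3 u v w| * norm3 t <=
  `|dot3 t u| * (norm3 v * norm3 w) + `|dot3 t v| * (norm3 w * norm3 u)
  + `|dot3 t w| * (norm3 u * norm3 v).
Proof.
have term_le a v' w' : norm3 (a *: cross3 v' w') <= `|a| * (norm3 v' * norm3 w').
  by rewrite norm3Z ler_wpM2l ?norm3_cross_le.
rewrite -norm3Z cramer3; apply: le_trans (ler_norm3D _ _) _.
by apply: lerD; [apply: le_trans (ler_norm3D _ _) _; apply: lerD|].
Qed.

Lemma sqr_det3_le u v w :
  det3 u v w ^+ 2 <= norm3 (cross3 u v) * norm3 (cross3 u w) * norm3 (cross3 v w).
Proof.
rewrite -[det3 _ _ _ ^+ 2]ger0_norm ?sqr_ge0 // sqr_det3 -mulrA.
apply: le_trans (cauchy_schwarz3 _ _) _; rewrite ler_wpM2l ?norm3_ge0 //.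
by apply: le_trans (norm3_cross_le _ _) _; rewrite mulrC (cross3C u w) norm3N.
Qed.

End Vectors.

(* [3 * (D / 6) / S] is the inradius of a tetrahedron of volume [D / 6] and surface area [S]. *)
Lemma aspect_det_lb (R : realFieldType) (l M D S K : R) :
  0 < l -> l <= M -> 0 < D -> 0 <= S -> D ^+ 2 <= (2 * S) ^+ 3 ->
  M / (3 * (D / 6) / S) <= K -> 0 < K /\ l ^+ 3 <= K ^+ 3 * D.
Proof.
move=> l_gt0 lM D_gt0 S_ge0 D_le aspect.
have S_gt0 : 0 < S.
  rewrite lt0r S_ge0 andbT; apply: contraTneq D_le => ->.
  by rewrite mulr0 expr0n /= -ltNge exprn_gt0.
have r_gt0 : 0 < D / (2 * S) by rewrite divr_gt0 ?mulr_gt0.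
have r_eq : 3 * (D / 6) / S = D / (2 * S) by field; rewrite gt_eqF.
rewrite r_eq ler_pdivrMr // in aspect.
have l_le := le_trans lM aspect.
have K_gt0 : 0 < K by rewrite -(pmulr_lgt0 _ r_gt0) (lt_le_trans l_gt0).
have l3_le : l ^+ 3 <= (K * (D / (2 * S))) ^+ 3.
  by rewrite ler_pXn2r // nnegrE ltW // mulr_gt0.
split => //; apply: le_trans l3_le _.
rewrite exprMn ler_wpM2l ?exprn_ge0 ?(ltW K_gt0) // expr_div_n.
rewrite ler_pdivrMr ?exprn_gt0 ?mulr_gt0 //.
by rewrite [D ^+ 3]exprS ler_wpM2l ?(ltW D_gt0).
Qed.

Section LocalRigidity.
Variable R : realType.

Lemma parallel_displacement_le (p1 p2 v1 v2 : 'rV[R]_3) (l dl : R) :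
  0 < l -> l <= norm3 (p1 - p2) -> cross3 (v1 - v2) (p1 - p2) = 0 ->
  `|dot3 (p1 - p2) (v1 - v2)| <= dl -> norm3 (v1 - v2) <= dl / l.
Proof.
move=> l_gt0 l_le par strain_le.
have norm_dot : norm3 (v1 - v2) * norm3 (p1 - p2) = `|dot3 (p1 - p2) (v1 - v2)|.
  rewrite -[LHS]ger0_norm ?mulr_ge0 ?norm3_ge0 // -sqrtr_sqr exprMn !sqr_norm3.
  by rewrite lagrange3 par dot3r0 addr0 sqrtr_sqr dot3C.
rewrite ler_pdivlMr // (le_trans (ler_wpM2l (norm3_ge0 _) l_le)) ?norm_dot //.
Qed.

(* Cramer's rule for the frame [N, p3 - p1, p2 - p1], where [N] is the face normal. *)
Lemma coplanar_displacement_le (p1 p2 p3 v1 v2 v3 : 'rV[R]_3) (a L dl B : R) :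
  0 < a -> a <= norm3 (cross3 (p2 - p1) (p3 - p1)) ->
  norm3 (p2 - p1) <= L -> norm3 (p3 - p1) <= L ->
  dot3 (v3 - v1) (cross3 (p2 - p1) (p3 - p1)) = 0 ->
  `|dot3 (p3 - p1) (v3 - v1)| <= dl -> `|dot3 (p3 - p2) (v3 - v2)| <= dl ->
  norm3 (v2 - v1) <= B ->
  norm3 (v3 - v1) <= L * (3 * dl + 2 * L * B) / a.
Proof.
move=> a_gt0 a_le le21 le31 normal13 strain13 strain23 le_v21.
set N := cross3 _ _ in a_le normal13; set x := v3 - v1.
have L_ge0 : 0 <= L := le_trans (norm3_ge0 _) le21.
have dl_ge0 : 0 <= dl := le_trans (normr_ge0 _) strain13.
have N_gt0 : 0 < norm3 N := lt_le_trans a_gt0 a_le.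
have proj31 : `|dot3 x (p3 - p1)| <= dl by rewrite dot3C.
have proj21 : `|dot3 x (p2 - p1)| <= 2 * dl + 2 * (L * B).
  have cs u : norm3 u <= L -> `|dot3 u (v2 - v1)| <= L * B.
    move=> le_u; apply: le_trans (cauchy_schwarz3 _ _) _.
    by apply: ler_pM; rewrite ?norm3_ge0.
  have := cs _ le31; have := cs _ le21.
  have -> : dot3 x (p2 - p1) = dot3 (p3 - p1) (v3 - v1) - dot3 (p3 - p1) (v2 - v1)
      - dot3 (p3 - p2) (v3 - v2) + dot3 (p2 - p1) (v2 - v1).
    by rewrite /x -[p1]vec3K -[p2]vec3K -[p3]vec3K -[v1]vec3K -[v2]vec3K -[v3]vec3K !vec3E; ring.
  move: strain13 strain23; set s1 := dot3 (p3 - p1) (v3 - v1); set s2 := dot3 (p3 - p1) _.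
  set s3 := dot3 (p3 - p2) _; set s4 := dot3 (p2 - p1) _ => *.
  have := ler_normD (s1 - s2 - s3) s4; have := ler_normD (s1 - s2) (- s3).
  have := ler_normD s1 (- s2); rewrite !normrN; lra.
have := cramer3_le x N (p3 - p1) (p2 - p1).
rewrite det3_cross_self normrN ger0_norm ?dot3_ge0 // -sqr_norm3 normal13 normr0 mul0r add0r.
have le_a : `|dot3 x (p3 - p1)| * (norm3 (p2 - p1) * norm3 N) <= dl * (L * norm3 N).
  by apply: ler_pM; rewrite ?mulr_ge0 ?norm3_ge0 ?ler_wpM2r ?norm3_ge0.
have le_b : `|dot3 x (p2 - p1)| * (norm3 N * norm3 (p3 - p1))
    <= (2 * dl + 2 * (L * B)) * (norm3 N * L).
  by apply: ler_pM; rewrite ?mulr_ge0 ?norm3_ge0 ?ler_wpM2l ?norm3_ge0.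
move=> /(le_trans)/(_ (lerD le_a le_b)) le_sum.
have le_Nx : norm3 N * norm3 x <= L * (3 * dl + 2 * L * B).
  rewrite -(ler_pM2l N_gt0) mulrA -expr2; apply: le_trans le_sum _.
  by rewrite le_eqVlt; apply/orP; left; apply/eqP; ring.
rewrite ler_pdivlMr // mulrC; apply: le_trans le_Nx.
by rewrite ler_wpM2r ?norm3_ge0.
Qed.

(* Cramer's rule for the three edges at [p4]: the components of [v4 - v1] along them
   are strains corrected by the displacements of [p2] and [p3]. *)
Lemma apex_displacement_le (p1 p2 p3 p4 v1 v2 v3 v4 : 'rV[R]_3) (D L dl B : R) :
  0 < D -> D <= `|det3 (p2 - p1) (p3 - p1) (p4 - p1)| ->
  norm3 (p4 - p1) <= L -> norm3 (p4 - p2) <= L -> norm3 (p4 - p3) <= L ->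
  `|dot3 (p4 - p1) (v4 - v1)| <= dl -> `|dot3 (p4 - p2) (v4 - v2)| <= dl ->
  `|dot3 (p4 - p3) (v4 - v3)| <= dl ->
  norm3 (v2 - v1) <= B -> norm3 (v3 - v1) <= B ->
  norm3 (v4 - v1) <= 3 * L ^+ 2 * (dl + L * B) / D.
Proof.
move=> D_gt0 D_le le41 le42 le43 strain41 strain42 strain43 le_v21 le_v31.
have L_ge0 : 0 <= L := le_trans (norm3_ge0 _) le41.
have B_ge0 : 0 <= B := le_trans (norm3_ge0 _) le_v21.
set x := v4 - v1.
have proj (pk vk : 'rV[R]_3) : norm3 (p4 - pk) <= L -> `|dot3 (p4 - pk) (v4 - vk)| <= dl ->
    norm3 (vk - v1) <= B -> `|dot3 x (p4 - pk)| <= dl + L * B.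
  move=> le_pk strain_k le_vk.
  rewrite /x -(subrK vk v4) -addrA dot3C dot3Dr.
  apply: le_trans (ler_normD _ _) _; apply: lerD => //.
  by apply: le_trans (cauchy_schwarz3 _ _) _; apply: ler_pM; rewrite ?norm3_ge0.
have proj1 : `|dot3 x (p4 - p1)| <= dl + L * B.
  by apply: (proj _ v1) => //; rewrite subrr /norm3 dot3r0 sqrtr0.
have proj2 := proj _ _ le42 strain42 le_v21.
have proj3 := proj _ _ le43 strain43 le_v31.
have term_le (k : R) (u w : 'rV[R]_3) : `|k| <= dl + L * B -> norm3 u <= L -> norm3 w <= L ->
    `|k| * (norm3 u * norm3 w) <= (dl + L * B) * L ^+ 2.
  move=> le_k le_u le_w; apply: ler_pM; rewrite ?mulr_ge0 ?norm3_ge0 // expr2.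
  by apply: ler_pM; rewrite ?norm3_ge0.
have := cramer3_le x (p4 - p1) (p4 - p2) (p4 - p3); rewrite det3_translate.
move=> /le_trans; move/(_ _ (lerD (lerD (term_le _ _ _ proj1 le42 le43)
  (term_le _ _ _ proj2 le43 le41)) (term_le _ _ _ proj3 le41 le42))) => le_sum.
rewrite ler_pdivlMr // mulrC; apply: le_trans (ler_wpM2r (norm3_ge0 x) D_le) _.
by apply: le_trans le_sum _; rewrite le_eqVlt; apply/orP; left; apply/eqP; ring.
Qed.

End LocalRigidity.

Section Complex.
Variable n : nat.
Implicit Types (a b c d x y : 'I_n) (t S : {set 'I_n}) (T : {set {set 'I_n}}).

Lemma card_set3 a b c : a != b -> a != c -> b != c -> #|[set a; b; c]| = 3.
Proof.
move=> ab ac bc; rewrite setUC cardsU1 cards2 !inE ab.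
by rewrite eq_sym (negbTE ac) eq_sym (negbTE bc).
Qed.

Lemma card_set4_neq a b c d : #|[set a; b; c; d]| = 4 -> a != b.
Proof.
apply: contra_eqN => /eqP ->; rewrite setUid neq_ltn; apply/orP; left.
apply: leq_ltn_trans (leq_card_setU _ _).1 _.
by rewrite cards1 cards2; case: (b != c).
Qed.

Lemma cards3_exists S : #|S| = 3 -> exists a b c, S = [set a; b; c].
Proof.
move=> S3; have /card_gt0P[a aS] : (0 < #|S|)%N by rewrite S3.
have /cards2P[b [c [_ Sa]]] : #|S :\ a| == 2.
  by move: S3; rewrite (cardsD1 a) aS add1n => -[->].
by exists a, b, c; rewrite -(setD1K aS) Sa setUA.
Qed.

Lemma tet_of_face t a b c : #|t| = 4 -> [set a; b; c] \subset t ->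
  #|[set a; b; c]| = 3 -> exists2 d, d \notin [set a; b; c] & t = [set a; b; c; d].
Proof.
move=> t4 St S3; have /cards1P[d td] : #|t :\: [set a; b; c]| == 1.
  by rewrite cardsD (setIidPr St) t4 S3.
have : d \in t :\: [set a; b; c] by rewrite td set11.
by rewrite inE => /andP[dS _]; exists d; rewrite // -(setID t [set a; b; c]) (setIidPr St) td.
Qed.

Lemma edge_of_tet T t x y : t \in T -> x \in t -> y \in t -> x != y -> is_edge T x y.
Proof. by move=> tT xt yt xy; rewrite /is_edge xy; apply/existsP; exists t; rewrite tT xt yt. Qed.

End Complex.

Section Energy.
Variables (R : realType) (n : nat) (p : 'I_n -> 'rV[R]_3) (T : {set {set 'I_n}}).
Variable gam : 'I_n -> 'I_n -> R.
Implicit Types (v : 'I_n -> 'rV[R]_3) (a b : 'I_n).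

Definition strain v a b : R := dot3 (p a - p b) (v a - v b).

Lemma strainC v a b : strain v a b = strain v b a.
Proof. by rewrite /strain -opprB -(opprB (v b)) dot3NN. Qed.

Lemma is_edgeC a b : is_edge T a b = is_edge T b a.
Proof.
rewrite /is_edge eq_sym; congr (_ && _).
by apply/existsP/existsP => -[t /and3P[tT ta tb]]; exists t; rewrite tT ta tb.
Qed.

Lemma bvec_dot v a b : a != b ->
  \sum_i dot3 (v i) (bvec p a b i) = (dist p a b)^-1 * strain v a b.
Proof.
move=> ab; rewrite (bigD1 a) //= (bigD1 b) 1?eq_sym //= big1; last first.
  by move=> i /andP[ib ia]; rewrite /bvec (negbTE ia) (negbTE ib) dot3r0.
rewrite /bvec eqxx eq_sym (negbTE ab) eqxx addr0 dot3Nr !dot3Zr -mulrBr.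
by rewrite /strain dot3C (dot3C (v b)) -dot3Nr -dot3Dr.
Qed.

Lemma mx11_outer (u w b c : 'rV[R]_3) : (u *m (b^T *m c) *m w^T) 0 0 = dot3 u b * dot3 c w.
Proof.
rewrite !mulmxA -(mulmxA (u *m b^T)) mxE big_ord1 /dot3 !mxE.
by congr (_ * _); apply: eq_bigr => k _; rewrite !mxE.
Qed.

Lemma qform_edgeE v : qform p T gam v =
  \sum_(a : 'I_n) \sum_(b : 'I_n | (a < b)%N)
    (if is_edge T a b then gam a b / dist p a b ^+ 3 * strain v a b ^+ 2 else 0).
Proof.
pose c a b := if is_edge T a b then gam a b / dist p a b else 0.
transitivity (\sum_i \sum_j \sum_(a : 'I_n) \sum_(b : 'I_n | (a < b)%N)
    c a b * (dot3 (v i) (bvec p a b i) * dot3 (v j) (bvec p a b j))).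
  apply: eq_bigr => i _; apply: eq_bigr => j _.
  rewrite /Mblk mulmx_sumr mulmx_suml summxE; apply: eq_bigr => a _.
  rewrite mulmx_sumr mulmx_suml summxE; apply: eq_bigr => b _.
  rewrite /c; case: ifP => _; last by rewrite mulmx0 mul0mx mxE mul0r.
  by rewrite -scalemxAr -scalemxAl mxE mx11_outer (dot3C (bvec _ _ _ j)).
under eq_bigr do rewrite exchange_big.
under eq_bigr do under eq_bigr do rewrite exchange_big.
rewrite exchange_big; apply: eq_bigr => a _; rewrite exchange_big; apply: eq_bigr => b ab.
have a_neq_b : a != b by rewrite -val_eqE neq_ltn ab.
under eq_bigr do rewrite -mulr_sumr.
rewrite -mulr_sumr -big_distrlr /= bvec_dot // /c; case: ifP => _; last by rewrite mul0r.
by rewrite -expr2 exprMn exprVn mulrA; congr (_ * _); rewrite -mulrA -invfM -exprS.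
Qed.

Hypothesis gam_ge0 : forall a b, is_edge T a b -> 0 <= gam a b.

Lemma edge_term_ge0 v a b :
  0 <= if is_edge T a b then gam a b / dist p a b ^+ 3 * strain v a b ^+ 2 else 0.
Proof.
by case: ifP => // /gam_ge0 ?; rewrite mulr_ge0 ?sqr_ge0 ?divr_ge0 ?exprn_ge0 ?norm3_ge0.
Qed.

Lemma qform_ge0 v : 0 <= qform p T gam v.
Proof. by rewrite qform_edgeE; do 2 apply: sumr_ge0 => ? _; apply: edge_term_ge0. Qed.

Lemma edge_energy_le v a b : is_edge T a b -> (a < b)%N ->
  gam a b / dist p a b ^+ 3 * strain v a b ^+ 2 <= qform p T gam v.
Proof.
move=> eab ab; rewrite qform_edgeE (bigD1 a) //= (bigD1 b) //= eab -addrA lerDl.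
by apply: addr_ge0; do ?apply: sumr_ge0 => ? _; apply: edge_term_ge0.
Qed.

End Energy.

(* Growth factors of the displacement bound: [face_gain] for the third vertex of the
   centered face, [apex_gain] for the vertex opposite a face of a tetrahedron. *)
Definition face_gain (R : realType) (l L D : R) : R := L ^+ 2 * (3 + 2 * L / l) / D.
Definition apex_gain (R : realType) (L D : R) : R := 3 * L ^+ 2 * (1 + 2 * L) / D.
Definition growth (R : realType) (l L D : R) : R :=
  (1 + apex_gain L D) * (1 + l^-1 + face_gain l L D).

Section Gains.
Variables (R : realType) (l L D : R).
Hypotheses (l_gt0 : 0 < l) (L_gt0 : 0 < L) (D_gt0 : 0 < D).

Lemma apex_gain_ge0 : 0 <= apex_gain L D.
Proof.
have L_ge0 := ltW L_gt0.
by rewrite /apex_gain divr_ge0 ?(ltW D_gt0) // !mulr_ge0 ?sqr_ge0 //; lra.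
Qed.

Lemma face_gain_ge0 : 0 <= face_gain l L D.
Proof.
have L_ge0 := ltW L_gt0; have l_ge0 := ltW l_gt0.
rewrite /face_gain divr_ge0 ?(ltW D_gt0) // mulr_ge0 ?sqr_ge0 // addr_ge0 ?ler0n //.
by rewrite divr_ge0 // mulr_ge0 ?ler0n.
Qed.

Lemma face_factor_ge1 : 1 <= 1 + l^-1 + face_gain l L D.
Proof. by rewrite -addrA lerDl addr_ge0 ?invr_ge0 ?(ltW l_gt0) ?face_gain_ge0. Qed.

Lemma apex_factor_le_growth : 1 + apex_gain L D <= growth l L D.
Proof. by rewrite /growth ler_peMr ?face_factor_ge1 // addr_ge0 ?apex_gain_ge0. Qed.

Lemma growth_ge1 : 1 <= growth l L D.
Proof. by apply: le_trans apex_factor_le_growth; rewrite lerDl apex_gain_ge0. Qed.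

End Gains.

Section TrussRigidity.
Variables (R : realType) (n : nat) (p : 'I_n -> 'rV[R]_3) (T : {set {set 'I_n}}).
Variables (gam : 'I_n -> 'I_n -> R) (K l L gmin gmax : R).
Hypotheses (l_gt0 : 0 < l) (gmin_gt0 : 0 < gmin).
Hypothesis ES : edge_simple K l L gmin gmax p T gam.

Lemma tet_card t : t \in T -> #|t| = 4.
Proof. by case: ES => -[card4 _] _ /card4. Qed.

Lemma edge_dist x y : is_edge T x y -> l <= dist p x y <= L.
Proof. by case: ES => _ [_ [edge_len _]] /edge_len. Qed.

Lemma tet_aspect_bound a b c d : [set a; b; c; d] \in T ->
  0 < K /\ l ^+ 3 <= K ^+ 3 * `|det3 (p b - p a) (p c - p a) (p d - p a)|.
Proof.
move=> tT; case: ES => _ [/(_ _ a b c d tT erefl) [vol_gt0 aspect] _].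
have /andP[l_le _] : l <= dist p a b <= L.
  by apply/edge_dist/(edge_of_tet tT); rewrite ?inE ?eqxx ?orbT // (card_set4_neq (tet_card tT)).
move: aspect vol_gt0; rewrite /tet_aspect /tet_inradius /tet_volume /tet_surface /tri_area.
set u := p b - p a; set w1 := p c - p a; set w2 := p d - p a.
set s1 := norm3 (cross3 u w1); set s2 := norm3 (cross3 u w2); set s3 := norm3 (cross3 w1 w2).
set s4 := norm3 _; set S := _ + _ + _ + _ => aspect vol_gt0.
have [s1_ge0 s2_ge0 s3_ge0 s4_ge0] : [/\ 0 <= s1, 0 <= s2, 0 <= s3 & 0 <= s4].
  by split; apply: norm3_ge0.
have det_le : `|det3 u w1 w2| ^+ 2 <= (2 * S) ^+ 3.
  rewrite real_normK ?num_real //; apply: le_trans (sqr_det3_le _ _ _) _.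
  rewrite -/s1 -/s2 -/s3 (_ : (2 * S) ^+ 3 = 2 * S * (2 * S) * (2 * S)); last by ring.
  have [s1_le s2_le s3_le] : [/\ s1 <= 2 * S, s2 <= 2 * S & s3 <= 2 * S] by rewrite /S; split=> /=; lra.
  by rewrite ler_pM ?mulr_ge0 ?ler_pM.
have l_le_M : l <= tet_maxedge p a b c d by rewrite /tet_maxedge !le_max l_le.
have det_gt0 : 0 < `|det3 u w1 w2| by move: vol_gt0; lra.
have S_ge0 : 0 <= S by rewrite /S; lra.
exact: aspect_det_lb l_gt0 l_le_M det_gt0 S_ge0 det_le aspect.
Qed.

Lemma edge_simple_consts s1 s2 s3 : oriented_triangle T s1 s2 s3 -> 0 < K /\ l <= L.
Proof.
move=> [n12 n13 n23 [t tT St]].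
have [d _ tE] := tet_of_face (tet_card tT) St (card_set3 n12 n13 n23).
have tT' : [set s1; s2; s3; d] \in T by rewrite -tE.
have [K_gt0 _] := tet_aspect_bound tT'.
split=> //; have /andP[l_le le_L] : l <= dist p s1 s2 <= L.
  by apply/edge_dist/(edge_of_tet tT _ _ n12); apply: (subsetP St); rewrite !inE eqxx ?orbT.
exact: le_trans le_L.
Qed.

Hypotheses (K_gt0 : 0 < K) (l_le_L : l <= L).
Variable v : 'I_n -> 'rV[R]_3.

Local Notation D := ((l / K) ^+ 3).
Local Notation kap := (gmin / L ^+ 3).
Local Notation dl := (Num.sqrt (qform p T gam v / kap)).

Let L_gt0 : 0 < L. Proof. exact: lt_le_trans l_le_L. Qed.
Let D_gt0 : 0 < D. Proof. by rewrite exprn_gt0 ?divr_gt0. Qed.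

Let kap_gt0 : 0 < kap.
Proof. by rewrite divr_gt0 ?exprn_gt0. Qed.

Lemma gam_ge0 a b : is_edge T a b -> 0 <= gam a b.
Proof.
case: ES => _ [_ [_ /(_ a b) gam_in]] /gam_in /andP[gmin_le _].
exact: le_trans (ltW gmin_gt0) gmin_le.
Qed.

Lemma energy_ge0 : 0 <= qform p T gam v.
Proof. exact: qform_ge0 gam_ge0 v. Qed.

Lemma strain_le x y : is_edge T x y -> `|strain p v x y| <= dl.
Proof.
wlog xy : x y / (x < y)%N => [wlog_xy exy|exy].
  case: (ltngtP x y) => [xy|yx|/val_inj xy]; first exact: wlog_xy.
    by rewrite strainC; apply: wlog_xy; rewrite // is_edgeC.
  by move: exy; rewrite /is_edge xy eqxx.
have /andP[l_le le_L] := edge_dist exy.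
have gam_ge : gmin <= gam x y by case: ES => _ [_ [_ /(_ x y exy) /andP[]]].
have dist_gt0 : 0 < dist p x y := lt_le_trans l_gt0 l_le.
apply: ler_norm_sqr; first exact: sqrtr_ge0.
rewrite sqr_sqrtr; last by rewrite divr_ge0 ?energy_ge0 ?(ltW kap_gt0).
rewrite ler_pdivlMr ?kap_gt0 // mulrC.
apply: le_trans (edge_energy_le p gam_ge0 v exy xy); rewrite ler_wpM2r ?sqr_ge0 //.
apply: ler_pM; rewrite ?invr_ge0 ?exprn_ge0 ?(ltW gmin_gt0) ?(ltW L_gt0) //.
by rewrite lef_pV2 ?posrE ?exprn_gt0 // lerXn2r ?nnegrE ?(ltW dist_gt0) ?(ltW L_gt0).
Qed.

Lemma tet_det_ge a b c d : [set a; b; c; d] \in T ->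
  D <= `|det3 (p b - p a) (p c - p a) (p d - p a)|.
Proof.
by move=> /tet_aspect_bound[_]; rewrite expr_div_n ler_pdivrMr ?exprn_gt0 // mulrC.
Qed.

Lemma tet_displacement_extend t a b c (w : 'rV[R]_3) (B : R) :
  t \in T -> [set a; b; c] \subset t -> #|[set a; b; c]| = 3 -> dl <= B ->
  {in [set a; b; c], forall y, norm3 (v y - w) <= B} ->
  {in t, forall x, norm3 (v x - w) <= (1 + apex_gain L D) * B}.
Proof.
move=> tT St S3 dl_le face_le.
have [d dS tE] := tet_of_face (tet_card tT) St S3.
have B_ge0 : 0 <= B := le_trans (sqrtr_ge0 _) dl_le.
have d_t : d \in t by rewrite tE in_setU set11 orbT.
have edge_d y : y \in [set a; b; c] -> is_edge T d y.
  move=> yS; apply: (edge_of_tet tT d_t); first by rewrite tE in_setU yS.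
  by apply/eqP => dy; move: dS; rewrite dy yS.
have [aS bS cS] : [/\ a \in [set a; b; c], b \in [set a; b; c] & c \in [set a; b; c]].
  by rewrite !inE !eqxx ?orbT.
have edge_len y yS := andP (edge_dist (edge_d y yS)).
have face_diam y : y \in [set a; b; c] -> norm3 (v y - v a) <= B + B.
  move=> yS; apply: le_trans (ler_dist3D _ w _) _.
  by rewrite (norm3_distC w); apply: lerD; apply: face_le.
have tT' : [set a; b; c; d] \in T by rewrite -tE.
have apex_le := apex_displacement_le D_gt0 (tet_det_ge tT') (proj2 (edge_len a aS))
  (proj2 (edge_len b bS)) (proj2 (edge_len c cS)) (strain_le (edge_d a aS))
  (strain_le (edge_d b bS)) (strain_le (edge_d c cS)) (face_diam b bS) (face_diam c cS).
move=> x; rewrite tE in_setU => /orP[/face_le x_le | /set1P ->].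
  by apply: le_trans x_le _; rewrite ler_peMl // lerDl (apex_gain_ge0 L_gt0 D_gt0).
apply: le_trans (ler_dist3D _ (v a) _) _; apply: le_trans (lerD apex_le (face_le a aS)) _.
rewrite [(1 + _) * B]mulrDl mul1r addrC lerD2l /apex_gain -subr_ge0.
rewrite (_ : _ - _ = 3 * L ^+ 2 / D * (B - dl)); last by ring.
have coef_ge0 : 0 <= 3 * L ^+ 2 / D.
  by apply: divr_ge0 (ltW D_gt0); apply: mulr_ge0 (sqr_ge0 L); rewrite ler0n.
by rewrite mulr_ge0 ?subr_ge0.
Qed.

Lemma base_face_displacement_le s1 s2 s3 :
  oriented_triangle T s1 s2 s3 -> centering_cond p s1 s2 s3 v ->
  {in [set s1; s2; s3], forall y, norm3 (v y - v s1) <= (1 + l^-1 + face_gain l L D) * dl}.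
Proof.
move=> [n12 n13 n23 [t tT St]] [_ normal13 par12].
have [d dS tE] := tet_of_face (tet_card tT) St (card_set3 n12 n13 n23).
have [s1S s2S s3S] : [/\ s1 \in [set s1; s2; s3], s2 \in [set s1; s2; s3] & s3 \in [set s1; s2; s3]].
  by rewrite !inE !eqxx ?orbT.
have edge y z : y \in [set s1; s2; s3] -> z \in [set s1; s2; s3] -> y != z -> is_edge T y z.
  by move=> yS zS; apply: (edge_of_tet tT); apply: (subsetP St).
have len y z yS zS yz := andP (edge_dist (edge y z yS zS yz)).
have n21 : s2 != s1 by rewrite eq_sym.
have n31 : s3 != s1 by rewrite eq_sym.
have n32 : s3 != s2 by rewrite eq_sym.
have dl_ge0 : 0 <= dl := sqrtr_ge0 _.
have v21 : norm3 (v s2 - v s1) <= dl / l.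
  rewrite norm3_distC; apply: (parallel_displacement_le l_gt0 _ par12).
    exact: (proj1 (len _ _ s1S s2S n12)).
  exact: (strain_le (edge _ _ s1S s2S n12)).
have area_ge : D / L <= norm3 (cross3 (p s2 - p s1) (p s3 - p s1)).
  have d_t : d \in t by rewrite tE in_setU set11 orbT.
  have ed1 : is_edge T d s1.
    by apply: (edge_of_tet tT d_t (subsetP St _ s1S)); apply: contraNneq dS => ->.
  have tT' : [set s1; s2; s3; d] \in T by rewrite -tE.
  rewrite ler_pdivrMr //; apply: le_trans (tet_det_ge tT') _.
  rewrite det3_dot_cross; apply: le_trans (cauchy_schwarz3 _ _) _.
  by rewrite ler_wpM2l ?norm3_ge0 //; case/andP: (edge_dist ed1).
have v31 : norm3 (v s3 - v s1) <= face_gain l L D * dl.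
  have := coplanar_displacement_le (divr_gt0 D_gt0 L_gt0) area_ge
    (proj2 (len _ _ s2S s1S n21)) (proj2 (len _ _ s3S s1S n31)) normal13
    (strain_le (edge _ _ s3S s1S n31)) (strain_le (edge _ _ s3S s2S n32)) v21.
  rewrite /face_gain (_ : L * _ / (D / L) = L ^+ 2 * (3 + 2 * L / l) / D * dl) //.
  by field; rewrite !gt_eqF.
have fg_ge0 := face_gain_ge0 l_gt0 L_gt0 D_gt0.
have inv_l_ge0 : 0 <= l^-1 by rewrite invr_ge0 ltW.
move=> y; rewrite !inE => /orP[/orP[]|] /eqP ->.
- by rewrite subrr /norm3 dot3r0 sqrtr0 mulr_ge0 //; lra.
- apply: le_trans v21 _; rewrite [dl / l]mulrC ler_wpM2r //; lra.
- apply: le_trans v31 _; rewrite ler_wpM2r //; lra.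
Qed.

Lemma chain_displacement_le s1 s2 s3 d f :
  oriented_triangle T s1 s2 s3 -> centering_cond p s1 s2 s3 v ->
  tchain T (fun _ => True) d f -> [set s1; s2; s3] \subset f 0%N ->
  forall k, (k <= d)%N -> {in f k, forall x, norm3 (v x - v s1) <= growth l L D ^+ k.+1 * dl}.
Proof.
move=> tri cc [f_in f_adj] S_f0; have dl_ge0 : 0 <= dl := sqrtr_ge0 _.
have [n12 n13 n23 _] := tri.
elim=> [|k IHk] kd.
  rewrite expr1 /growth -mulrA; apply: tet_displacement_extend (proj1 (f_in 0%N kd)) S_f0 _ _ _.
  - exact: card_set3.
  - by rewrite ler_peMl // face_factor_ge1.
  - exact: base_face_displacement_le.
have /eqP face3 := f_adj k kd; have [a [b [c abcE]]] := cards3_exists face3.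
have abc_sub : [set a; b; c] \subset f k.+1 by rewrite -abcE subsetIr.
have abc3 : #|[set a; b; c]| = 3 by rewrite -abcE.
have A_ge1 := growth_ge1 l_gt0 L_gt0 D_gt0.
have B_ge : dl <= growth l L D ^+ k.+1 * dl by rewrite ler_peMl // exprn_ege1.
have face_le : {in [set a; b; c], forall y, norm3 (v y - v s1) <= growth l L D ^+ k.+1 * dl}.
  by move=> y; rewrite -abcE => /setIP[y_fk _]; apply: IHk (ltnW kd) y y_fk.
move=> x /(tet_displacement_extend (proj1 (f_in _ kd)) abc_sub abc3 B_ge face_le) x_le.
apply: le_trans x_le _; rewrite [growth l L D ^+ k.+2]exprS mulrA ler_wpM2r //.
by rewrite ler_wpM2r ?exprn_ge0 ?apex_factor_le_growth // (le_trans ler01 A_ge1).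
Qed.

Lemma tdist_displacement_le s1 s2 s3 x h :
  oriented_triangle T s1 s2 s3 -> centering_cond p s1 s2 s3 v ->
  tdist_le T [set s1; s2; s3] [set x] h -> norm3 (v x - v s1) <= growth l L D ^+ h.+1 * dl.
Proof.
move=> tri cc [d [f [dh [chain [S_f0 x_fd]]]]].
have x_in : x \in f d by apply: (subsetP x_fd); rewrite set11.
apply: le_trans (chain_displacement_le tri cc chain S_f0 (leqnn d) x_in) _.
by rewrite ler_wpM2r ?sqrtr_ge0 // ler_weXn2l // (growth_ge1 l_gt0 L_gt0 D_gt0).
Qed.

Lemma pair_displacement_le s1 s2 s3 i j h :
  oriented_triangle T s1 s2 s3 -> centering_cond p s1 s2 s3 v ->
  tdist_le T [set s1; s2; s3] [set i] h -> tdist_le T [set s1; s2; s3] [set j] h ->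
  norm3 (v i - v j) <= 2 * (growth l L D ^+ h.+1 * dl).
Proof.
move=> tri cc /(tdist_displacement_le tri cc) i_le /(tdist_displacement_le tri cc) j_le.
by apply: le_trans (ler_dist3D _ (v s1) _) _; rewrite (norm3_distC (v s1)); lra.
Qed.

End TrussRigidity.

Lemma exists_pow2_ge (R : archiRealDomainType) (x : R) : exists m : nat, x <= 2 ^+ m.
Proof.
exists (Num.Def.archi_bound `|x|); apply: le_trans (ler_norm x) _.
apply: le_trans (ltW (archi_boundP (normr_ge0 x))) _.
by rewrite -natrX ler_nat ltnW // ltn_expl.
Qed.

Lemma sqr_le_pow2 (R : rcfType) (A kap E N : R) (C h : nat) :
  1 <= A -> 0 < kap -> 0 <= E -> (4 / kap + 1) * A ^+ 2 <= 2 ^+ C ->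
  0 <= N -> N <= 2 * (A ^+ h.+1 * Num.sqrt (E / kap)) ->
  ((2 : R) ^+ (C * h.+1))^-1 * N ^+ 2 <= E.
Proof.
move=> A_ge1 kap_gt0 E_ge0 C_ge N_ge0 N_le.
have A_ge0 : 0 <= A := le_trans ler01 A_ge1.
have c_ge0 : 0 <= 4 / kap by rewrite divr_ge0 ?ler0n ?ltW.
have N2_le : N ^+ 2 <= 4 / kap * (A ^+ h.+1) ^+ 2 * E.
  apply: le_trans (lerXn2r 2 _ _ N_le) _; rewrite ?nnegrE ?mulr_ge0 ?exprn_ge0 ?sqrtr_ge0 //.
  rewrite [(2 * _) ^+ 2]exprMn [(A ^+ h.+1 * _) ^+ 2]exprMn sqr_sqrtr ?divr_ge0 ?(ltW kap_gt0) //.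
  by rewrite le_eqVlt; apply/orP; left; apply/eqP; ring.
rewrite mulrC ler_pdivrMr ?exprn_gt0 //; apply: le_trans N2_le _.
rewrite [E * _]mulrC ler_wpM2r // exprM [(A ^+ _) ^+ 2]exprAC.
apply: le_trans (lerXn2r h.+1 _ _ C_ge); rewrite ?nnegrE ?mulr_ge0 ?exprn_ge0 ?addr_ge0 //.
rewrite [X in _ <= X]exprMn ler_wpM2r ?exprn_ge0 ?sqr_ge0 //.
have c1_ge1 : 1 <= 4 / kap + 1 by rewrite lerDr.
by apply: le_trans (ler_eXnr _ c1_ge1); rewrite ?lerDl.
Qed.

Unset Implicit Arguments.

Theorem lemma4p4 (R : realType) (K Lmin Lmax gmin gmax : R) :
  0 < Lmin -> 0 < gmin ->
  exists C : nat,
  forall (n : nat) (p : 'I_n -> 'rV[R]_3) (T : {set {set 'I_n}})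
         (gam : 'I_n -> 'I_n -> R),
    injective p ->
    edge_simple K Lmin Lmax gmin gmax p T gam ->
    stiffly_connected T ->
    forall q : 'I_n -> 'rV[R]_3,
    orth_nullspace p T gam q ->
    forall (c s1 s2 s3 : 'I_n),
    oriented_triangle T s1 s2 s3 ->
    forall cxy cxz cyz : R,
    centering_cond p s1 s2 s3 (shifted p c q cxy cxz cyz) ->
    forall (i j : 'I_n) (h : nat),
    tdist_le T [set s1; s2; s3] [set i] h ->
    tdist_le T [set s1; s2; s3] [set j] h ->
    qform p T gam (shifted p c q cxy cxz cyz) >=
      ((2 : R) ^+ (C * h.+1))^-1 *
      norm3 (shifted p c q cxy cxz cyz i - shifted p c q cxy cxz cyz j) ^+ 2.
Proof.
move=> Lmin_gt0 gmin_gt0.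
pose A := growth Lmin Lmax ((Lmin / K) ^+ 3).
have [C C_ge] := exists_pow2_ge ((4 / (gmin / Lmax ^+ 3) + 1) * A ^+ 2).
exists C => n p T gam _ ES _ q _ c s1 s2 s3 tri cxy cxz cyz cc i j h i_near j_near.
have [K_gt0 Lmin_le] := edge_simple_consts Lmin_gt0 ES tri.
have L_gt0 := lt_le_trans Lmin_gt0 Lmin_le.
apply: sqr_le_pow2 C_ge _ _.
- exact: growth_ge1 Lmin_gt0 L_gt0 (exprn_gt0 _ (divr_gt0 Lmin_gt0 K_gt0)).
- exact: divr_gt0 gmin_gt0 (exprn_gt0 _ L_gt0).
- exact: energy_ge0 gmin_gt0 ES _.
- exact: norm3_ge0.
- exact: (pair_displacement_le Lmin_gt0 gmin_gt0 ES K_gt0 Lmin_le tri cc i_near j_near).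
Qed.
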